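(* Let $1\le k\le d$ and $\mu\ge1$ be integers, and let $t_0,\dots,t_\mu$ be defined by $t_\mu=1$ and $t_m=\sum_{j=m+1}^{\mu}t_j\,(j-m-1)\binom{d-k+1}{j-m}$ for $0\le m<\mu$. Then $$\sum_{m=0}^{\mu}t_m\binom{d}{m}=\sum_{m=0}^{\mu}(d-k)^{\mu-m}\binom{k}{m},\qquad \sum_{m=0}^{\mu}t_m\binom{d-1}{m-1}=\sum_{m=0}^{\mu}(d-k)^{\mu-m}\binom{k-1}{m-1},$$ $$\sum_{m=0}^{\mu}t_m\, m\left[\binom{d+1}{m+1}-\binom{d-k+1}{m+1}\right]=\sum_{m=0}^{\mu}k(d-k)^{\mu-m}\binom{k}{m}-\binom{k}{\mu+1}.$$
   Context: Conventions: $0^0=1$; $\binom{\ell}{m}=0$ if $m<0$ or $m>\ell$ (for $\ell\ge0$). *)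

From HB Require Import structures.
From mathcomp Require Import all_boot all_order all_algebra.
Set Implicit Arguments. Unset Strict Implicit. Unset Printing Implicit Defensive.
Import Order.TTheory GRing.Theory Num.Theory.
Local Open Scope ring_scope.

Definition binz (l : nat) (m : int) : int :=
  match m with
  | Posz m' => ('C(l, m'))%:Z
  | Negz _ => 0
  end.

From HB Require Import structures.
From mathcomp Require Import all_boot all_order all_algebra.
From mathcomp Require Import zify ring.

Set Implicit Arguments.
Unset Strict Implicit.
Unset Printing Implicit Defensive.
Import Order.TTheory GRing.Theory Num.Theory.
Local Open Scope ring_scope.

(* Write n = d - k.  The recurrence for t says precisely that the functional
   G |-> \sum_(m <= mu) t_m G_m sends (1 + X)^n (1 - nX) X^l to [l = mu], hence
   sends (1 + X)^n (1 - nX) G to the coefficient G_mu.  As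
   (1 - nX)(1 + nX + ... + (nX)^mu) = 1 - (nX)^(mu+1) and the functional ignores
   multiples of X^(mu+1), it sends A (1 + X)^n to \sum_(j <= mu) A_j n^(mu-j).
   The three identities are the cases A = (1 + X)^k, A = X (1 + X)^(k-1), and
   A (1 + X)^n = ((1 + X)^n (1 - nX) - (1 + X)^d (1 - dX)) / X, whose m-th
   coefficient is m [C(d+1, m+1) - C(n+1, m+1)]. *)

Lemma drop_poly1M (R : nzSemiRingType) (p q : {poly R}) :
  q`_0 = 0 -> drop_poly 1 (p * q) = p * drop_poly 1 q.
Proof.
move=> q0; have qE : q = drop_poly 1 q * 'X^1.
  by apply/polyP => -[|i]; rewrite coefMXn coef_drop_poly //= subn1 addn1.
by rewrite {1}qE mulrA drop_polyMXn_id.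
Qed.

Section BinomialPolynomials.

Variable R : comNzRingType.

Lemma coefXD1n (N i : nat) : (('X + 1 : {poly R}) ^+ N)`_i = 'C(N, i)%:R.
Proof.
elim: N i => [|N IHN] [|i]; rewrite ?expr0 ?coef1 // exprS mulrDl mul1r coefD.
  by rewrite coefXM add0r IHN !bin0.
by rewrite coefXM !IHN binS natrD addrC.
Qed.

Definition recpoly (n : nat) : {poly R} := ('X + 1) ^+ n * (1 - n%:R *: 'X).

Lemma coef_recpoly0 n : (recpoly n)`_0 = 1.
Proof.
by rewrite /recpoly mulrBr mulr1 coefB coefXD1n bin0 -scalerAr coefZ coefMX /= mulr0 subr0.
Qed.

Lemma coef_recpolyS n i : (recpoly n)`_i.+1 = - (i%:R * 'C(n.+1, i.+1)%:R).
Proof.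
have binE : ('C(n, i.+1) + i * 'C(n.+1, i.+1) = n * 'C(n, i))%N.
  have := mul_bin_diag n.+1 i; rewrite binS /=; nia.
rewrite /recpoly mulrBr mulr1 coefB -scalerAr coefZ coefMX /= !coefXD1n.
by rewrite -!natrM -binE natrD; ring.
Qed.

Lemma sum_binS_geom (k mu : nat) (c : R) :
  \sum_(j < mu.+1) 'C(k, j.+1)%:R * c ^+ (mu - j) + c ^+ mu.+1
  = c * \sum_(j < mu.+1) 'C(k, j)%:R * c ^+ (mu - j) + 'C(k, mu.+1)%:R.
Proof.
transitivity (\sum_(j < mu.+2) 'C(k, j)%:R * c ^+ (mu.+1 - j)).
  by rewrite [RHS]big_ord_recl addrC bin0 mul1r subn0; congr (_ + _).
rewrite big_ord_recr /= subnn expr0 mulr1 mulr_sumr.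
by under eq_bigr => j _ do rewrite (@subSn j mu (ltn_ord j)) exprS mulrCA.
Qed.

Definition geompoly (c : R) (mu : nat) : {poly R} := \poly_(i < mu.+1) c ^+ i.

Lemma mul_geompoly c mu :
  (1 - c *: 'X) * geompoly c mu = 1 - c ^+ mu.+1 *: 'X^(mu.+1).
Proof.
have -> : geompoly c mu = \sum_(i < mu.+1) 1 ^+ (mu.+1.-1 - i) * (c *: 'X) ^+ i.
  by rewrite /geompoly poly_def; apply: eq_bigr => i _; rewrite expr1n mul1r exprZn.
by rewrite -subrXX expr1n exprZn.
Qed.

Section RecurrenceFunctional.

Variables (n mu : nat) (t : nat -> R).
Hypothesis t_top : t mu = 1.
Hypothesis t_rec : forall m : nat, (m < mu)%N ->
  t m = \sum_(m.+1 <= j < mu.+1) t j * (j - m - 1)%:R * 'C(n.+1, j - m)%:R.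

Definition tdot (G : {poly R}) : R := \sum_(0 <= m < mu.+1) t m * G`_m.

Lemma tdotD p q : tdot (p + q) = tdot p + tdot q.
Proof. by rewrite /tdot -big_split; apply: eq_bigr => m _; rewrite coefD mulrDr. Qed.

Lemma tdotZ c p : tdot (c *: p) = c * tdot p.
Proof. by rewrite /tdot mulr_sumr; apply: eq_bigr => m _; rewrite coefZ mulrCA. Qed.

Lemma tdot_sum (I : Type) (r : seq I) (F : I -> {poly R}) :
  tdot (\sum_(i <- r) F i) = \sum_(i <- r) tdot (F i).
Proof.
by apply: (big_morph tdot tdotD); rewrite /tdot big1 // => m _; rewrite coef0 mulr0.
Qed.

Lemma tdot_mulXn_eq0 p : tdot (p * 'X^(mu.+1)) = 0.
Proof.
rewrite /tdot big1_seq // => m; rewrite mem_index_iota => /and3P[_ _ lt_m_mu1].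
by rewrite coefMXn lt_m_mu1 mulr0.
Qed.

Lemma tdot_recpolyXn l : tdot (recpoly n * 'X^l) = (l == mu)%:R.
Proof.
rewrite /tdot; case: (ltngtP l mu) => [lt_l_mu|lt_mu_l|->].
- rewrite (big_cat_nat (n := l)) ?leqW ?(ltnW lt_l_mu) //= big1_seq ?add0r; last first.
    move=> i; rewrite mem_index_iota => /and3P[_ _ lt_i_l].
    by rewrite coefMXn lt_i_l mulr0.
  rewrite big_ltn; last exact: leqW.
  rewrite coefMXn ltnn subnn coef_recpoly0 mulr1 (t_rec lt_l_mu) -big_split.
  rewrite big1_seq //= => j; rewrite mem_index_iota => /andP[lt_l_j _].
  rewrite coefMXn ltnNge (ltnW lt_l_j) /= -(subnSK lt_l_j) coef_recpolyS.
  by rewrite subnSK // subn1 -subnS mulrN mulrA subrr.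
- rewrite big1_seq // => i; rewrite mem_index_iota => /and3P[_ _ le_i_mu].
  by rewrite coefMXn (leq_trans le_i_mu lt_mu_l) mulr0.
- rewrite big_nat_recr //= coefMXn ltnn subnn coef_recpoly0 t_top mulr1.
  rewrite big1_seq ?add0r // => i; rewrite mem_index_iota => /and3P[_ _ lt_i_mu].
  by rewrite coefMXn lt_i_mu mulr0.
Qed.

Lemma tdot_recpolyM G : tdot (recpoly n * G) = G`_mu.
Proof.
rewrite -[G in LHS](poly_take_drop mu.+1) mulrDr mulrA tdotD tdot_mulXn_eq0 addr0.
rewrite /take_poly poly_def mulr_sumr tdot_sum.
under eq_bigr => i _ do rewrite -scalerAr tdotZ tdot_recpolyXn.
rewrite big_ord_recr /= eqxx mulr1 big1 ?add0r // => i _.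
by rewrite ltn_eqF ?mulr0.
Qed.

Lemma tdot_mulXD1n A :
  tdot (A * ('X + 1) ^+ n) = \sum_(j < mu.+1) A`_j * n%:R ^+ (mu - j).
Proof.
have decomp : A * ('X + 1) ^+ n = recpoly n * (A * geompoly n%:R mu)
    + (n%:R ^+ mu.+1 *: (A * ('X + 1) ^+ n)) * 'X^(mu.+1).
  rewrite /recpoly -mulrA [(1 - _) * _]mulrCA mul_geompoly -!mul_polyC; ring.
rewrite decomp tdotD tdot_recpolyM tdot_mulXn_eq0 addr0 coefM.
by apply: eq_bigr => j _; rewrite /geompoly coef_poly ltnS leq_subr.
Qed.

Lemma tdot_drop_recpolyB k :
  tdot (drop_poly 1 (recpoly n - recpoly (k + n)))
  = k%:R * \sum_(j < mu.+1) 'C(k, j)%:R * n%:R ^+ (mu - j) - 'C(k, mu.+1)%:R.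
Proof.
set B : {poly R} := (1 - n%:R *: 'X) - ('X + 1) ^+ k * (1 - (k + n)%:R *: 'X).
have -> : recpoly n - recpoly (k + n) = B * ('X + 1) ^+ n.
  by rewrite /recpoly /B exprD -!mul_polyC; ring.
have B0 : B`_0 = 0.
  rewrite /B coefB coef0M !coefB coef1 !coefZ coefX coefXD1n bin0 /=.
  by rewrite !mulr0 !subr0 mul1r subrr.
rewrite mulrC drop_poly1M // mulrC tdot_mulXD1n.
under eq_bigr => j _ do rewrite coef_drop_poly addn1 /B !coefB coef1 coefZ coefX
  mulrBr mulr1 coefB coefXD1n -scalerAr coefZ coefMX /= coefXD1n.
transitivity (\sum_(j < mu.+1) ((k + n)%:R * ('C(k, j)%:R * n%:R ^+ (mu - j))
    - ('C(k, j.+1)%:R * n%:R ^+ (mu - j) + (j == 0 :> nat)%:R * n%:R ^+ mu.+1)) : R).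
  by apply: eq_bigr => -[[|j] ?] _ /=; rewrite ?subn0 ?exprS; ring.
have sum_indicator :
    \sum_(j < mu.+1) (j == 0 :> nat)%:R * n%:R ^+ mu.+1 = n%:R ^+ mu.+1 :> R.
  by rewrite big_ord_recl big1 ?mul1r ?addr0 // => i _; rewrite lift0 mul0r.
by rewrite sumrB big_split /= -mulr_sumr sum_indicator sum_binS_geom natrD; ring.
Qed.

End RecurrenceFunctional.

End BinomialPolynomials.

Lemma coefXMXD1n (N m : nat) :
  ('X * ('X + 1 : {poly int}) ^+ N)`_m = binz N (m%:Z - 1).
Proof. by rewrite coefXM; case: m => [|m] //=; rewrite coefXD1n natz subn1. Qed.

Theorem mainTheorem10 (k d mu : nat) (t : nat -> int)
  (hk1 : (1 <= k)%N) (hkd : (k <= d)%N) (hmu : (1 <= mu)%N)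
  (ht_top : t mu = 1)
  (ht_rec : forall m : nat, (m < mu)%N ->
     t m = \sum_(m.+1 <= j < mu.+1)
             t j * ((j - m - 1)%N)%:Z * ('C(d - k + 1, j - m))%:Z) :
  (\sum_(0 <= m < mu.+1) t m * ('C(d, m))%:Z
     = \sum_(0 <= m < mu.+1) ((d - k)%N)%:Z ^+ (mu - m) * ('C(k, m))%:Z)
  /\
  (\sum_(0 <= m < mu.+1) t m * binz (d - 1) (m%:Z - 1)
     = \sum_(0 <= m < mu.+1) ((d - k)%N)%:Z ^+ (mu - m) * binz (k - 1) (m%:Z - 1))
  /\
  (\sum_(0 <= m < mu.+1) t m * m%:Z
        * (('C(d.+1, m.+1))%:Z - ('C(d - k + 1, m.+1))%:Z)
     = \sum_(0 <= m < mu.+1) k%:Z * ((d - k)%N)%:Z ^+ (mu - m) * ('C(k, m))%:Z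
       - ('C(k, mu.+1))%:Z).
Proof.
have [n dE] : {n : nat | d = (k + n)%N} by exists (d - k)%N; rewrite subnKC.
subst d; rewrite addKn addn1 in ht_rec *.
have t_rec m : (m < mu)%N ->
    t m = \sum_(m.+1 <= j < mu.+1) t j * (j - m - 1)%:R * 'C(n.+1, j - m)%:R.
  by move=> /ht_rec ->; apply: eq_bigr => j _; rewrite !natz.
have tdotE := tdot_mulXD1n ht_top t_rec.
split; [|split].
- transitivity (tdot mu t (('X + 1) ^+ k * ('X + 1) ^+ n)).
    by rewrite -exprD; apply: eq_bigr => m _; rewrite coefXD1n natz.
  by rewrite tdotE big_mkord; apply: eq_bigr => j _; rewrite coefXD1n !natz mulrC.
- transitivity (tdot mu t ('X * ('X + 1) ^+ (k - 1) * ('X + 1) ^+ n)).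
    rewrite -mulrA -exprD addnBAC //.
    by apply: eq_bigr => m _; rewrite coefXMXD1n.
  by rewrite tdotE big_mkord; apply: eq_bigr => j _; rewrite coefXMXD1n natz mulrC.
- transitivity (tdot mu t (drop_poly 1 (recpoly _ n - recpoly _ (k + n)))).
    apply: eq_bigr => m _; rewrite coef_drop_poly addn1 coefB !coef_recpolyS !natz.
    by rewrite -addSn; ring.
  rewrite (tdot_drop_recpolyB ht_top t_rec) big_mkord mulr_sumr !natz.
  by congr (_ - _); apply: eq_bigr => j _; rewrite natz; ring.
Qed.
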